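(* Assume CH. If $\mathcal{I}$ is an unboring ideal, then there is an uncountable Mr\'owka space in $\mathrm{FinBW}(\mathcal{I})$.
   Context: An ideal on an infinite countable set $X$ is a family $\mathcal{I}\subseteq\mathcal{P}(X)$ closed under subsets and finite unions, containing all finite subsets, with $X\notin\mathcal{I}$. A space $X$ is in $\mathrm{FinBW}(\mathcal{I})$ if $X$ is Hausdorff and for every sequence $(x_n)_{n\in\bigcup\mathcal{I}}$ in $X$ there is $A\notin\mathcal{I}$ with $(x_n)_{n\in A}$ convergent in $X$. $\mathrm{Fin}^2$: ideal on $\omega^2$ of all $A$ with only finitely many $n$ such that $\{m:(n,m)\in A\}$ is infinite. $\mathcal{BI}$: ideal on $\omega^3$ of all $A$ for which there is $k$ with $\{(j,l):(i,j,l)\in A\}\in\mathrm{Fin}^2$ for $i<k$ and finite for $i\ge k$. $\mathcal{I}\sqsubseteq\mathcal{J}$: there is a bijection $f:\bigcup\mathcal{J}\to\bigcup\mathcal{I}$ with $f^{-1}[A]\in\mathcal{J}$ for all $A\in\mathcal{I}$. $\mathcal{I}$ is unboring if $\mathcal{BI}\not\sqsubseteq\mathcal{I}$. A Mr\'owka space is $\Phi(\mathcal{A})$ for an infinite almost disjoint family $\mathcal{A}$ of infinite subsets of $\omega$: underlying set $\omega\cup\mathcal{A}\cup\{\infty\}$, points of $\omega$ isolated, basic neighbourhoods of $A\in\mathcal{A}$ are $\{A\}\cup(A\setminus F)$ ($F\subseteq\omega$ finite), of $\infty$ are $\{\infty\}\cup(\mathcal{A}\setminus G)\cup(\omega\setminus(F\cup\bigcup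 G))$ ($F\subseteq\omega$, $G\subseteq\mathcal{A}$ finite). *)

From HB Require Import structures.
From mathcomp Require Import all_boot all_order.
From mathcomp Require Import boolp classical_sets cardinality topology.
Set Implicit Arguments. Unset Strict Implicit. Unset Printing Implicit Defensive.
Local Open Scope classical_set_scope.

Definition CH : Prop :=
  forall S : set (set nat), countable S \/ (S #= [set: set nat])%card.

Definition is_ideal (X : Type) (I : set (set X)) : Prop :=
  [/\ (forall A B : set X, B `<=` A -> I A -> I B),
      (forall A B : set X, I A -> I B -> I (A `|` B)),
      (forall A : set X, finite_set A -> I A) &
      ~ I [set: X]].

Definition Fin2 : set (set (nat * nat)) :=
  [set A | finite_set [set n | infinite_set [set m | A (n, m)]]].

Definition BI : set (set (nat * (nat * nat))) :=
  [set A | exists k : nat,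
      (forall i, (i < k)%N -> Fin2 [set jl | A (i, jl)]) /\
      (forall i, (k <= i)%N -> finite_set [set jl | A (i, jl)])].

(* I ⊑ J : there is a bijection f : bigcup J -> bigcup I such that
   f^{-1}[A] ∈ J for all A ∈ I.  (bigcup of an ideal = the whole type.) *)
Definition ideal_below (X Y : Type) (I : set (set X)) (J : set (set Y)) : Prop :=
  exists f : Y -> X, bijective f /\ (forall A : set X, I A -> J (f @^-1` A)).

Definition unboring (X : Type) (I : set (set X)) : Prop := ~ ideal_below BI I.

Definition converges_on (X : Type) (T : topologicalType) (x : X -> T) (B : set X) : Prop :=
  exists p : T, forall U : set T, nbhs p U -> finite_set [set n | B n /\ ~ U (x n)].

Definition FinBW (X : Type) (I : set (set X)) (T : topologicalType) : Prop :=
  hausdorff_space T /\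
  forall x : X -> T, exists B : set X, ~ I B /\ converges_on x B.

Definition almost_disjoint_family (A : set (set nat)) : Prop :=
  [/\ infinite_set A,
      (forall a, A a -> infinite_set a) &
      (forall a b, A a -> A b -> a <> b -> finite_set (a `&` b))].

Inductive mpt (A : set (set nat)) : Type :=
  | MN of nat
  | MA of {a : set nat | A a}
  | MInf.

Arguments MN {A}. Arguments MA {A}. Arguments MInf {A}.

(* basic neighbourhoods, parametrised by finite F ⊆ omega, finite G ⊆ A *)
Definition mbasic (A : set (set nat)) (F : set nat) (G : set {a : set nat | A a})
    (p : mpt A) : set (mpt A) :=
  match p with
  | MN n => [set q | q = MN n]
  | MA a => [set q | q = MA a \/ exists n, q = MN n /\ proj1_sig a n /\ ~ F n]
  | MInf => [set q | q = MInf \/ (exists b, q = MA b /\ ~ G b) \/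
              (exists n, q = MN n /\ ~ F n /\ forall b, G b -> ~ proj1_sig b n)]
  end.

Lemma mbasic_anti A F F' G G' p :
  F `<=` F' -> G `<=` G' -> mbasic F' G' p `<=` @mbasic A F G p.
Proof.
move=> FF GG; case: p => [n|a|] q /=.
- by [].
- case=> [->|[n [-> [an Fn]]]]; first by left.
  by right; exists n; split=> //; split=> // /FF.
- case=> [->|[[b [-> Gb]]|[n [-> [Fn Gn]]]]]; first by left.
  + by right; left; exists b; split=> // /GG.
  + right; right; exists n; split=> //; split; first by move/FF.
    by move=> b /GG; apply: Gn.
Qed.

Definition mopen (A : set (set nat)) (U : set (mpt A)) : Prop :=
  forall p, U p -> exists F G, [/\ finite_set F, finite_set G & mbasic F G p `<=` U].

HB.instance Definition _ A := gen_eqMixin (mpt A).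
HB.instance Definition _ A := gen_choiceMixin (mpt A).

Lemma mopenT A : mopen [set: mpt A].
Proof. by move=> p _; exists set0, set0; split=> //; exact: finite_set0. Qed.

Lemma mopenI A : setI_closed (@mopen A).
Proof.
move=> U V oU oV p [Up Vp].
have [F1 [G1 [fF1 fG1 sU]]] := oU p Up.
have [F2 [G2 [fF2 fG2 sV]]] := oV p Vp.
exists (F1 `|` F2), (G1 `|` G2); split; [by rewrite finite_setU | by rewrite finite_setU | ].
move=> q bq; split.
- by apply: sU; apply: (mbasic_anti _ _ bq) => x Hx; left.
- by apply: sV; apply: (mbasic_anti _ _ bq) => x Hx; right.
Qed.

Lemma mopen_bigU A (J : Type) (f : J -> set (mpt A)) :
  (forall i, mopen (f i)) -> mopen (\bigcup_i f i).
Proof.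
move=> hf p [i _ fip]; have [F [G [fF fG s]]] := hf i p fip.
by exists F, G; split=> // q /s fq; exists i.
Qed.

HB.instance Definition _ A :=
  isOpenTopological.Build (mpt A) (@mopenT A) (@mopenI A) (@mopen_bigU A).

Definition mrowka (A : set (set nat)) : topologicalType := mpt A.

From HB Require Import structures.
From mathcomp Require Import all_boot all_order.
From mathcomp Require Import boolp classical_sets cardinality topology.
From mathcomp Require Import wochoice.
Local Open Scope classical_set_scope.
Set Implicit Arguments. Unset Strict Implicit. Unset Printing Implicit Defensive.

(* Under CH the partial sequences (D, g) in omega (g : X -> nat, read on
   D) can be listed in order type omega_1, and the almost disjoint family is
   built by transfinite recursion on top of countably many disjoint seeds.
   At stage w a set a_w, almost disjoint from the countably many earlier
   sets, is chosen by a diagonal argument so that either an I-positive part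
   of the w-th sequence converges in Phi(A) (to a point of omega, to a_w or
   to an earlier set), or the values of the sequence can be sorted into rows
   so that I contains every set that is infinite on only finitely many rows
   and on only finitely many values.  For a sequence in Phi(A) without an
   I-positive convergent part, the terms at infinity and in A can be sorted
   in the same way; the rows and values (pieces) of the resulting pattern,
   once normalised, give coordinates (row, piece, position) witnessing
   BI below I, which unboringness forbids. *)


Section Ideal.
Variables (X : Type) (I : set (set X)).
Hypothesis idealI : is_ideal I.

Lemma idealS (A B : set X) : B `<=` A -> I A -> I B.
Proof. by case: idealI => h _ _ _; apply: h. Qed.

Lemma idealU (A B : set X) : I A -> I B -> I (A `|` B).
Proof. by case: idealI => _ h _ _; apply: h. Qed.

Lemma ideal_finite (A : set X) : finite_set A -> I A.
Proof. by case: idealI => _ _ h _; apply: h. Qed.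

Lemma idealNT : ~ I [set: X].
Proof. by case: idealI. Qed.

Lemma ideal0 : I set0.
Proof. exact: ideal_finite. Qed.

Lemma ideal_bigcup (T : Type) (D : set T) (F : T -> set X) :
  finite_set D -> (forall k, D k -> I (F k)) -> I (\bigcup_(k in D) F k).
Proof.
move=> /(@finite_seqP {classic T}) [s ->]; elim: s => [|a s IH] IF.
  by apply: idealS ideal0 => x [k]; rewrite /= in_nil.
apply: (idealS (A := F a `|` \bigcup_(k in [set` s]) F k)).
  by move=> x [k /=]; rewrite inE => /orP[/eqP->|ks] Fx; [left|right; exists k].
apply: idealU; first by apply: IF; rewrite /= mem_head.
by apply: IH => k ks; apply: IF; rewrite /= inE ks orbT.
Qed.

Lemma positive_infinite (A : set X) : ~ I A -> infinite_set A.
Proof. by move=> nA /ideal_finite. Qed.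

Lemma positive_nonempty (A : set X) : ~ I A -> A !=set0.
Proof. by move=> /positive_infinite/infinite_setN0. Qed.

End Ideal.

Lemma finite_set_empty (T : Type) (A : set T) : (forall x, ~ A x) -> finite_set A.
Proof. by move=> h; apply: (sub_finite_set _ (finite_set0 T)) => x /h. Qed.

Lemma infinite_image_inj (T U : Type) (A : set T) (f : T -> U) :
  infinite_set A -> {in A &, injective f} -> infinite_set (f @` A).
Proof. by move=> iA inj; rewrite (eq_finite_set (inj_card_eq inj)). Qed.

Lemma countable_infinite_enum (T : Type) (S : set T) :
  countable S -> infinite_set S ->
  exists (f : T -> nat) (g : nat -> T),
    (forall x, S x -> g (f x) = x) /\ (forall n, S (g n) /\ f (g n) = n).
Proof.
move=> cS iS; have /card_set_bijP [f [_ finj fsurj]] := eq_card_nat cS iS.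
have /choice [g hg] : forall n, exists x, S x /\ f x = n.
  by move=> n; have [x Sx <-] := fsurj n I; exists x.
exists f, g; split=> // x Sx.
by apply: finj; rewrite ?inE //; case: (hg (f x)).
Qed.

Section Mrowka.
Variable A : set (set nat).

Lemma nbhs_mbasic_sub (p : mrowka A) (U : set (mrowka A)) : nbhs p U ->
  exists F G, [/\ finite_set F, finite_set G & mbasic F G p `<=` U].
Proof.
rewrite nbhsE => -[B [oB Bp] BU].
have [F [G [fF fG sB]]] := (oB : mopen B) p Bp.
by exists F, G; split => // z /sB /BU.
Qed.

Lemma mbasic_center F G (p : mrowka A) : mbasic F G p p.
Proof. by case: p => [n|a|] /=; [|left|left]. Qed.

Hypothesis AD : forall a b, A a -> A b -> a <> b -> finite_set (a `&` b).

Lemma mbasic_open F G (p : mrowka A) : finite_set F -> finite_set G ->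
  open (mbasic F G p).
Proof.
move=> fF fG; change (mopen (mbasic F G p)) => q bq; case: q bq => [n|b|] bq.
- by exists set0, set0; split => // z /= ->.
- case: p bq => [n|a|] //=.
  + by case=> [[->]|[n [//]]]; exists F, G; split.
  + case=> [//|[[b' [[<-] nG]]|[n [//]]]].
    exists (F `|` \bigcup_(g in G) (sval b `&` sval g)), set0; split => //.
    * rewrite finite_setU; split => //; apply: bigcup_finite => // g Gg.
      apply: AD; [exact: svalP|exact: svalP|].
      by move=> ebg; apply: nG; rewrite (_ : b = g) //; exact: eq_sig_hprop.
    * move=> z /= [->|[k [-> [bk nF]]]]; first by right; left; exists b.
      right; right; exists k; split => //; split; first by move=> Fk; apply: nF; left.
      by move=> g Gg gk; apply: nF; right; exists g.
- case: p bq => [n|a|] //=; first by case=> [|[n []]].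
  by move=> _; exists F, G; split.
Qed.

Lemma nbhs_mbasic F G (p : mrowka A) : finite_set F -> finite_set G ->
  nbhs p (mbasic F G p).
Proof.
move=> fF fG; apply: open_nbhs_nbhs; split; first exact: mbasic_open.
exact: mbasic_center.
Qed.

Lemma mbasic_separate (p q : mrowka A) : p <> q ->
  exists F1 G1 F2 G2, [/\ finite_set F1, finite_set G1, finite_set F2,
    finite_set G2 & forall z, mbasic F1 G1 p z -> mbasic F2 G2 q z -> False].
Proof.
case: p => [n|a|] pq.
- exists set0, set0, [set n], set0; split => //.
  move=> z /= ->; case: q pq => [m|b|] /= pq.
  + by case=> e; apply: pq; rewrite e.
  + by case=> [//|[k [[->] [_ /(_ erefl)]]]].
  + by case=> [//|[[b [//]]|[k [[->] [/(_ erefl)]]]]].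
- case: q pq => [m|b|] pq.
  + exists [set m], set0, set0, set0; split => //.
    by move=> z + /= e; rewrite e /=; case=> [//|[k [[->] [_ /(_ erefl)]]]].
  + have ab : sval a <> sval b by move=> e; apply: pq; congr MA; exact: eq_sig_hprop.
    have fab := AD (svalP a) (svalP b) ab.
    exists (sval a `&` sval b), set0, (sval a `&` sval b), set0; split => //.
    move=> z /= [->|[k [-> [ak nk]]]].
      by case=> [[e]|[k [//]]]; apply: pq; rewrite e.
    by case=> [//|[k' [[<-] [bk _]]]]; apply: nk.
  + exists set0, set0, set0, [set a]; split => //.
    move=> z /= [->|[k [-> [ak _]]]].
      by case=> [//|[[b [[->] /(_ erefl)]]|[k [//]]]].
    by case=> [//|[[b [//]]|[k' [[<-] [_ /(_ a erefl)]]]]].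
- case: q pq => [m|b|] pq; last by [].
  + exists [set m], set0, set0, set0; split => //.
    move=> z + /= e; rewrite e /=.
    by case=> [//|[[b [//]]|[k [[<-] [/(_ erefl)]]]]].
  + exists set0, [set b], set0, set0; split => //.
    move=> z + /= [e|[k [e [bk _]]]]; rewrite e /=.
      by case=> [//|[[b' [[->] /(_ erefl)]]|[k [//]]]].
    by case=> [//|[[b' [//]]|[k' [[<-] [_ /(_ b erefl)]]]]].
Qed.

Lemma mrowka_hausdorff : hausdorff_space (mrowka A).
Proof.
move=> p q cl; apply: contrapT => pq.
have [F1 [G1 [F2 [G2 [f1 g1 f2 g2 dis]]]]] := mbasic_separate pq.
have [z [z1 z2]] := cl _ _ (nbhs_mbasic p f1 g1) (nbhs_mbasic q f2 g2).
exact: dis z1 z2.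
Qed.

End Mrowka.

Section Convergence.
Variables (A : set (set nat)) (X : Type) (x : X -> mrowka A).

Lemma converges_on_cst (B : set X) v : (forall n, B n -> x n = v) ->
  converges_on x B.
Proof.
move=> h; exists v => U /nbhs_singleton Uv.
by apply: finite_set_empty => n [Bn nU]; apply: nU; rewrite h.
Qed.

Lemma converges_on_MInf (B : set X) :
  (forall n, B n -> exists a, x n = MA a) ->
  (forall a, finite_set [set n | B n /\ x n = MA a]) -> converges_on x B.
Proof.
move=> hB hf; exists MInf => U /nbhs_mbasic_sub [F [G [fF fG sU]]].
apply: (sub_finite_set (B := \bigcup_(a in G) [set n | B n /\ x n = MA a])).
  move=> n [Bn nU]; have [a e] := hB n Bn; exists a => //.
  by apply: contrapT => Ga; apply: nU; apply: sU; rewrite e; right; left; exists a.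
exact: bigcup_finite.
Qed.

Lemma converges_on_MA (B : set X) (c : {a | A a}) (g : X -> nat) :
  (forall n, B n -> x n = MN (g n) /\ sval c (g n)) ->
  (forall m, finite_set [set n | B n /\ g n = m]) -> converges_on x B.
Proof.
move=> hB hf; exists (MA c) => U /nbhs_mbasic_sub [F [G [fF fG sU]]].
apply: (sub_finite_set (B := \bigcup_(m in F) [set n | B n /\ g n = m])).
  move=> n [Bn nU]; have [e cg] := hB n Bn; exists (g n) => //.
  by apply: contrapT => Fg; apply: nU; apply: sU; rewrite e; right; exists (g n).
exact: bigcup_finite.
Qed.

End Convergence.

Section Fibres.
Variables (X : Type) (g : X -> nat).

Definition finite_fibres (A : set X) := forall m, finite_set (A `&` [set x | g x = m]).

Definition infinite_fibres (A : set X) := [set m | infinite_set (A `&` [set x | g x = m])].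

Lemma infinite_fibres_image (A : set X) : infinite_fibres A `<=` g @` A.
Proof. by move=> m /infinite_setN0 [x [Ax <-]]; exists x. Qed.

Lemma infinite_fibres0 (A : set X) : finite_fibres A -> infinite_fibres A = set0.
Proof. by move=> fA; apply/seteqP; split=> // m /= []. Qed.

End Fibres.

Lemma infinite_image_finite_fibres (T : Type) (g : T -> nat) (B : set T) :
  finite_fibres g B -> infinite_set B -> infinite_set (g @` B).
Proof.
move=> fib iB fim; apply: iB.
apply: (sub_finite_set (B := \bigcup_(m in g @` B) (B `&` [set x | g x = m]))).
  by move=> x Bx; exists (g x); [exists x|].
exact: bigcup_finite.
Qed.

(* [s] sorts [X] into rows and [p] sorts each row into pieces.  Through the
   coordinates (row, piece, position), the sets of [BI] are those infinite on
   only finitely many rows and on only finitely many pieces. *)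
Definition bi_small (X : Type) (p s : X -> nat) (A : set X) :=
  finite_set (infinite_fibres p A) /\ finite_set (infinite_fibres s A).

Definition bi_pattern (X : Type) (I : set (set X)) (p s : X -> nat) :=
  (forall x y, p x = p y -> s x = s y) /\ (forall A, bi_small p s A -> I A).

Section Pattern.
Variables (X : Type) (I : set (set X)) (p s : X -> nat).
Hypothesis idealI : is_ideal I.

Lemma bi_pattern_piece : bi_pattern I p s -> forall k, I [set x | p x = k].
Proof.
case=> ps small k; apply: small; split.
  apply: (sub_finite_set (B := [set k])) => [m|]; last exact: finite_set1.
  by move=> /infinite_fibres_image [x /= ->].
have [[y py]|ny] := pselect (exists y, p y = k).
  apply: (sub_finite_set (B := [set s y])) => [i|]; last exact: finite_set1.
  by move=> /infinite_fibres_image [x /= px <-]; apply: ps; rewrite px.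
apply: finite_set_empty => i /infinite_fibres_image [x px _]; apply: ny.
by exists x.
Qed.

Lemma bi_pattern_row_subset : bi_pattern I p s -> forall i A,
  A `<=` [set x | s x = i] -> finite_fibres p A -> I A.
Proof.
case=> _ small i A Ai fA; apply: small; split; first by rewrite infinite_fibres0.
apply: (sub_finite_set (B := [set i])) => [j|]; last exact: finite_set1.
by move=> /infinite_fibres_image [x /Ai /= <- <-].
Qed.

Lemma bi_pattern_finite_rows : bi_pattern I p s -> forall A,
  finite_fibres s A -> I A.
Proof.
case=> ps small A fA; apply: small; split; last by rewrite infinite_fibres0.
apply: finite_set_empty => k ik; apply: (ik).
have [y [Ay py]] := infinite_setN0 ik.
apply: sub_finite_set (fA (s y)) => x [Ax px]; split => //.
by apply: ps; rewrite px py.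
Qed.

Lemma bi_pattern_intro : (forall x y, p x = p y -> s x = s y) ->
  (forall k, I [set x | p x = k]) ->
  (forall i A, A `<=` [set x | s x = i] -> finite_fibres p A -> I A) ->
  (forall A, finite_fibres s A -> I A) -> bi_pattern I p s.
Proof.
move=> ps pieceI rowI rowsI; split => // A [fKp fKs].
pose A1 := A `\` \bigcup_(k in infinite_fibres p A) [set x | p x = k].
pose A2 := A1 `\` \bigcup_(i in infinite_fibres s A) (A1 `&` [set x | s x = i]).
have fA1 : finite_fibres p A1.
  move=> k; have [Kk|nKk] := pselect (infinite_fibres p A k).
    by apply: finite_set_empty => x [[_ nU] px]; apply: nU; exists k.
  by apply: contrapT => iA1; apply: nKk; apply: contra_not iA1; apply: sub_finite_set => x [[]].
have fA2 : finite_fibres s A2.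
  move=> i; have [Ki|nKi] := pselect (infinite_fibres s A i).
    by apply: finite_set_empty => x [[A1x nU] si]; apply: nU; exists i.
  by apply: contrapT => iA2; apply: nKi; apply: contra_not iA2; apply: sub_finite_set => x [[[]]].
apply: (idealS idealI (A := \bigcup_(k in infinite_fibres p A) [set x | p x = k] `|`
    \bigcup_(i in infinite_fibres s A) (A1 `&` [set x | s x = i]) `|` A2)).
  move=> x Ax; case: (pselect (A1 x)) => [A1x|nA1x]; last first.
    by left; left; apply: contrapT => nU; apply: nA1x.
  by case: (pselect (A2 x)) => [|nA2x]; [right|left; right; apply: contrapT => nU; apply: nA2x].
apply: (idealU idealI); last exact: rowsI.
apply: (idealU idealI); first by apply: (ideal_bigcup idealI).
apply: (ideal_bigcup idealI) => // i _; apply: (rowI i); first by move=> x [].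
by move=> k; apply: sub_finite_set (fA1 k) => x [[]].
Qed.

End Pattern.

Lemma half_double_odd n : (n.*2.+1)./2 = n.
Proof. by rewrite /= uphalf_double. Qed.

Lemma double_oddN a b : a.*2.+1 <> b.*2.
Proof. by move=> /(congr1 odd); rewrite /= !odd_double. Qed.

(* To normalise a pattern, call a row wide when it has infinitely many
   infinite pieces.  Each wide row [i] becomes row [2i+1], whose pieces are
   its infinite pieces, the finite ones being merged into the first one.  The
   rows that are not wide belong to [I]; if infinitely many of them are
   infinite, they are gathered into the single row [0], in which each infinite
   one is a piece and the finite ones join the first; otherwise they are all
   merged into a piece of the first wide row. *)
Section Normalize.
Variables (X : Type) (I : set (set X)) (p s : X -> nat).
Hypotheses (idealI : is_ideal I) (pat : bi_pattern I p s).

Definition inf_piece k := infinite_set [set x | p x = k].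
Definition row_pieces i := [set k | inf_piece k /\ exists y, p y = k /\ s y = i].
Definition wide i := infinite_set (row_pieces i).
Definition piece0 i := xget 0%N (row_pieces i).
Definition narrow i := ~ wide i /\ infinite_set [set x | s x = i].
Definition many_narrow := infinite_set narrow.
Definition narrow0 := xget 0%N narrow.
Definition wide0 := xget 0%N wide.

Definition norm_row x :=
  if `[< wide (s x) >] then (s x).*2.+1
  else if `[< many_narrow >] then 0%N else wide0.*2.+1.

Definition norm_piece x :=
  if `[< wide (s x) >] then
    (if `[< inf_piece (p x) >] then (p x).*2.+1 else (piece0 (s x)).*2.+1)
  else if `[< many_narrow >] then
    (if `[< infinite_set [set y | s y = s x] >] then (s x).*2 else narrow0.*2)
  else (piece0 wide0).*2.+1.

Lemma row_piecesP i k y : row_pieces i k -> p y = k -> s y = i.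
Proof. by move=> [_ [z [pz <-]]] py; apply: pat.1; rewrite py pz. Qed.

Lemma finite_pieces_ideal i : I [set x | s x = i /\ ~ inf_piece (p x)].
Proof.
apply: (bi_pattern_row_subset pat (i := i)); first by move=> x [].
move=> k; have [ik|nik] := pselect (inf_piece k).
  by apply: finite_set_empty => x [[_ nf] px]; apply: nf; rewrite px.
by apply: contrapT => iA; apply: nik; apply: contra_not iA; apply: sub_finite_set => x [].
Qed.

Lemma not_wide_ideal i : ~ wide i -> I [set x | s x = i].
Proof.
move=> /contrapT fN.
apply: (idealS idealI (A := \bigcup_(k in row_pieces i) [set x | p x = k] `|`
                             [set x | s x = i /\ ~ inf_piece (p x)])).
  move=> x sx; have [ix|] := pselect (inf_piece (p x)); last by right.
  by left; exists (p x) => //; split => //; exists x.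
apply: (idealU idealI); last exact: finite_pieces_ideal.
by apply: (ideal_bigcup idealI) => // k _; apply: (bi_pattern_piece pat).
Qed.

Lemma finite_rows_ideal : I [set x | finite_set [set y | s y = s x]].
Proof.
apply: (bi_pattern_finite_rows pat) => i.
have [fi|ii] := pselect (finite_set [set y | s y = i]).
  by apply: sub_finite_set fi => x [].
by apply: finite_set_empty => x [fx sx]; apply: ii; rewrite -sx.
Qed.

Lemma few_narrow_ideal : ~ many_narrow -> I [set x | ~ wide (s x)].
Proof.
move=> /contrapT fN.
apply: (idealS idealI (A := \bigcup_(i in narrow) [set x | s x = i] `|`
                             [set x | finite_set [set y | s y = s x]])).
  move=> x nw; have [fx|ix] := pselect (finite_set [set y | s y = s x]); first by right.
  by left; exists (s x).
apply: (idealU idealI); last exact: finite_rows_ideal.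
by apply: (ideal_bigcup idealI) => // i [nw _]; apply: not_wide_ideal.
Qed.

Lemma wide0P : ~ many_narrow -> wide wide0.
Proof.
move=> fN; apply: xgetPex; apply: contrapT => /forallNP nw.
apply: (idealNT idealI); apply: (idealS idealI _ (few_narrow_ideal fN)) => x _.
exact: nw.
Qed.

Lemma piece0P i : wide i -> row_pieces i (piece0 i).
Proof. by move=> /infinite_setN0; apply: xgetPex. Qed.

Lemma narrow0P : many_narrow -> narrow narrow0.
Proof. by move=> /infinite_setN0; apply: xgetPex. Qed.

Lemma norm_wide_inf y : wide (s y) -> inf_piece (p y) ->
  norm_piece y = (p y).*2.+1 /\ norm_row y = (s y).*2.+1.
Proof. by move=> w i; rewrite /norm_piece /norm_row (asboolT w) (asboolT i). Qed.

Lemma norm_wide_fin y : wide (s y) -> ~ inf_piece (p y) ->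
  norm_piece y = (piece0 (s y)).*2.+1 /\ norm_row y = (s y).*2.+1.
Proof. by move=> w f; rewrite /norm_piece /norm_row (asboolT w) (asboolF f). Qed.

Lemma norm_narrow_inf y : ~ wide (s y) -> many_narrow ->
  infinite_set [set z | s z = s y] -> norm_piece y = (s y).*2 /\ norm_row y = 0%N.
Proof.
by move=> w m i; rewrite /norm_piece /norm_row (asboolF w) (asboolT m) (asboolT i).
Qed.

Lemma norm_narrow_fin y : ~ wide (s y) -> many_narrow ->
  finite_set [set z | s z = s y] -> norm_piece y = narrow0.*2 /\ norm_row y = 0%N.
Proof.
by move=> w m f; rewrite /norm_piece /norm_row (asboolF w) (asboolT m) asboolF.
Qed.

Lemma norm_few_narrow y : ~ wide (s y) -> ~ many_narrow ->
  norm_piece y = (piece0 wide0).*2.+1 /\ norm_row y = wide0.*2.+1.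
Proof. by move=> w m; rewrite /norm_piece /norm_row (asboolF w) (asboolF m). Qed.

Lemma norm_row_narrow y : ~ wide (s y) -> many_narrow -> norm_row y = 0%N.
Proof.
move=> w m; have [i|f] := pselect (infinite_set [set z | s z = s y]).
  by case: (norm_narrow_inf w m i).
by case: (norm_narrow_fin w m (contrapT f)).
Qed.

Lemma norm_row_wide y : wide (s y) -> norm_row y = (s y).*2.+1.
Proof.
move=> w; have [i|f] := pselect (inf_piece (p y)).
  by case: (norm_wide_inf w i).
by case: (norm_wide_fin w f).
Qed.

Lemma norm_piece_wide i k : wide i -> row_pieces i k -> forall y, p y = k ->
  norm_piece y = k.*2.+1 /\ norm_row y = i.*2.+1.
Proof.
move=> w ik y py; have sy := row_piecesP ik py; case: (ik) => iik _.
by rewrite -py -sy; apply: norm_wide_inf; rewrite ?sy ?py.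
Qed.

Lemma norm_piece_cases x :
  (exists2 k, norm_piece x = k.*2.+1 /\ inf_piece k &
     forall y, p y = k -> norm_piece y = k.*2.+1 /\ norm_row y = norm_row x) \/
  (exists2 i, norm_piece x = i.*2 /\ narrow i &
     norm_row x = 0%N /\ forall y, s y = i -> norm_piece y = i.*2 /\ norm_row y = 0%N).
Proof.
have [w|nw] := pselect (wide (s x)).
  left; have [k rk nx] : exists2 k, row_pieces (s x) k & norm_piece x = k.*2.+1.
    have [i|f] := pselect (inf_piece (p x)).
      by exists (p x); [split => //; exists x|case: (norm_wide_inf w i)].
    by exists (piece0 (s x)); [exact: piece0P|case: (norm_wide_fin w f)].
  exists k; first by split => //; case: rk.
  by move=> y py; rewrite (norm_row_wide w); exact: (norm_piece_wide w rk py).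
have [m|nm] := pselect many_narrow.
  right; have [i ni nx] : exists2 i, narrow i & norm_piece x = i.*2.
    have [ix|fx] := pselect (infinite_set [set z | s z = s x]).
      by exists (s x); [split|case: (norm_narrow_inf nw m ix)].
    by exists narrow0; [exact: narrow0P|case: (norm_narrow_fin nw m (contrapT fx))].
  exists i => //; split; first exact: norm_row_narrow.
  by move=> y sy; case: ni => nwi ii; rewrite -sy; apply: norm_narrow_inf; rewrite ?sy.
left; have w0 := wide0P nm; have r0 := piece0P w0.
exists (piece0 wide0); first by split; [case: (norm_few_narrow nw nm)|case: r0].
by move=> y py; rewrite (norm_few_narrow nw nm).2; exact: (norm_piece_wide w0 r0 py).
Qed.

Lemma norm_piece_row x y : norm_piece x = norm_piece y -> norm_row x = norm_row y.
Proof.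
case: (norm_piece_cases x) => [[k [-> ik] hx]|[i [-> _] [rx _]]];
case: (norm_piece_cases y) => [[k' [-> _] hy]|[i' [-> _] [ry _]]].
- move=> /eq_add_S /double_inj ek; subst k'.
  have [z pz] := infinite_setN0 ik.
  by rewrite -(hx z pz).2 (hy z pz).2.
- by move/double_oddN.
- by move/esym/double_oddN.
- by rewrite rx ry.
Qed.

Lemma finite_pieces_of_row_ideal k : I [set x | ~ inf_piece (p x) /\ row_pieces (s x) k].
Proof.
have [[i rik]|nk] := pselect (exists i, row_pieces i k); last first.
  by apply: (idealS idealI _ (ideal0 idealI)) => x [_ h]; apply: nk; exists (s x).
apply: (idealS idealI _ (finite_pieces_ideal i)) => x [nf rxk]; split => //.
by have [_ [y [py <-]]] := rik; rewrite (row_piecesP rxk py).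
Qed.

Lemma not_wide_row_ideal i : I [set x | ~ wide (s x) /\ s x = i].
Proof.
have [w|nw] := pselect (wide i).
  by apply: (idealS idealI _ (ideal0 idealI)) => x [nw sx]; apply: nw; rewrite sx.
by apply: (idealS idealI _ (not_wide_ideal nw)) => x [].
Qed.

Lemma few_narrow_part_ideal : I [set x | ~ many_narrow /\ ~ wide (s x)].
Proof.
have [m|nm] := pselect many_narrow; first by apply: (idealS idealI _ (ideal0 idealI)) => x [].
by apply: (idealS idealI _ (few_narrow_ideal nm)) => x [].
Qed.

Lemma norm_piece_ideal L : I [set x | norm_piece x = L].
Proof.
apply: (idealS idealI (A := [set x | p x = L./2]
   `|` [set x | ~ inf_piece (p x) /\ row_pieces (s x) L./2]
   `|` ([set x | ~ wide (s x) /\ s x = L./2] `|` [set x | finite_set [set y | s y = s x]])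
   `|` [set x | ~ many_narrow /\ ~ wide (s x)])).
  move=> x /= <-; have [w|nw] := pselect (wide (s x)).
    have [i|f] := pselect (inf_piece (p x)).
      by have [-> _] := norm_wide_inf w i; left; left; left; rewrite half_double_odd.
    have [-> _] := norm_wide_fin w f; left; left; right.
    by rewrite half_double_odd; split => //; apply: piece0P.
  have [m|nm] := pselect many_narrow; last by right.
  have [ix|fx] := pselect (infinite_set [set z | s z = s x]).
    by have [-> _] := norm_narrow_inf nw m ix; left; right; left; rewrite doubleK.
  by left; right; right; apply: contrapT.
apply: (idealU idealI); last exact: few_narrow_part_ideal.
apply: (idealU idealI); last first.
  by apply: (idealU idealI); [exact: not_wide_row_ideal|exact: finite_rows_ideal].
apply: (idealU idealI); first exact: (bi_pattern_piece pat).
exact: finite_pieces_of_row_ideal.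
Qed.

Lemma norm_row_subset_ideal R A : A `<=` [set x | norm_row x = R] ->
  finite_fibres norm_piece A -> I A.
Proof.
move=> AR fA.
apply: (idealS idealI (A := (A `&` [set x | wide (s x) /\ s x = R./2])
   `|` (A `&` [set x | ~ wide (s x) /\ many_narrow])
   `|` [set x | ~ many_narrow /\ ~ wide (s x)])).
  move=> x Ax; have [w|nw] := pselect (wide (s x)).
    left; left; split => //; split => //.
    by rewrite -(AR x Ax) norm_row_wide // half_double_odd.
  by have [m|nm] := pselect many_narrow; [left; right|right].
apply: (idealU idealI); last exact: few_narrow_part_ideal.
apply: (idealU idealI).
  apply: (bi_pattern_row_subset pat (i := R./2)); first by move=> x [_ []].
  move=> k; have [ik|fk] := pselect (inf_piece k); last first.
    by apply: (sub_finite_set (B := [set x | p x = k])); [move=> x []|exact: contrapT].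
  apply: sub_finite_set (fA k.*2.+1) => x [[Ax [w sx]] px]; split => //=.
  have ipx : inf_piece (p x) by rewrite px.
  by have [-> _] := norm_wide_inf w ipx; rewrite px.
apply: (bi_pattern_finite_rows pat) => i.
have [w|nw] := pselect (wide i).
  by apply: finite_set_empty => x [[_ [nw _]] sx]; apply: nw; rewrite sx.
have [ii|fi] := pselect (infinite_set [set z | s z = i]); last first.
  by apply: (sub_finite_set (B := [set z | s z = i])); [move=> x []|exact: contrapT].
apply: sub_finite_set (fA i.*2) => x [[Ax [nwx m]] sx]; split => //=.
by rewrite -sx in ii; have [-> _] := norm_narrow_inf nwx m ii; rewrite sx.
Qed.

Lemma norm_finite_rows_ideal A : finite_fibres norm_row A -> I A.
Proof.
move=> fA.
apply: (idealS idealI (A := (A `&` [set x | wide (s x)])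
   `|` (A `&` [set x | ~ wide (s x) /\ many_narrow])
   `|` [set x | ~ many_narrow /\ ~ wide (s x)])).
  move=> x Ax; have [w|nw] := pselect (wide (s x)); first by left; left.
  by have [m|nm] := pselect many_narrow; [left; right|right].
apply: (idealU idealI); last exact: few_narrow_part_ideal.
apply: (idealU idealI).
  apply: (bi_pattern_finite_rows pat) => i; have [w|nw] := pselect (wide i); last first.
    by apply: finite_set_empty => x [[_ w] sx]; apply: nw; rewrite -sx.
  apply: sub_finite_set (fA i.*2.+1) => x [[Ax w'] sx]; split => //=.
  by rewrite norm_row_wide // sx.
apply: (ideal_finite idealI); apply: sub_finite_set (fA 0%N) => x [Ax [nw m]].
by split => //=; apply: norm_row_narrow.
Qed.

Lemma norm_pattern : bi_pattern I norm_piece norm_row.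
Proof.
apply: (bi_pattern_intro idealI norm_piece_row norm_piece_ideal).
  exact: norm_row_subset_ideal.
exact: norm_finite_rows_ideal.
Qed.

Lemma norm_piece_infinite x : infinite_set [set y | norm_piece y = norm_piece x].
Proof.
case: (norm_piece_cases x) => [[k [ex ik] hx]|[i [ex [_ ii]] [_ hx]]].
  by apply: (sub_infinite_set _ ik) => y /hx []; rewrite ex.
by apply: (sub_infinite_set _ ii) => y /hx []; rewrite ex.
Qed.

Lemma norm_row_infinite x :
  infinite_set [set L | exists y, norm_piece y = L /\ norm_row y = norm_row x].
Proof.
have wide_case i : wide i -> norm_row x = i.*2.+1 ->
    infinite_set [set L | exists y, norm_piece y = L /\ norm_row y = norm_row x].
  move=> w rx; apply: (sub_infinite_set (A := (fun k => k.*2.+1) @` row_pieces i)).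
    move=> L [k ik <-]; have [_ [y [py _]]] := ik.
    by exists y; rewrite rx; exact: (norm_piece_wide w ik py).
  by apply: infinite_image_inj => // a b _ _ /eq_add_S /double_inj.
have [w|nw] := pselect (wide (s x)); first exact: (wide_case _ w (norm_row_wide w)).
have [m|nm] := pselect many_narrow; last first.
  by apply: (wide_case wide0); [exact: wide0P|case: (norm_few_narrow nw nm)].
apply: (sub_infinite_set (A := double @` narrow)).
  move=> L [i [nwi ii] <-]; have [y sy] := infinite_setN0 ii.
  exists y; rewrite (norm_row_narrow nw m) -sy.
  by apply: norm_narrow_inf; rewrite ?sy.
by apply: infinite_image_inj => // a b _ _ /double_inj.
Qed.

End Normalize.

Lemma BI_finite_heavy (A : set (nat * (nat * nat))) : BI A ->
  finite_set [set i | infinite_set [set jl | A (i, jl)]] /\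
  finite_set [set c : nat * nat | infinite_set [set l | A (c.1, (c.2, l))]].
Proof.
move=> [k0 [fin2 fin]].
have row_small i : infinite_set [set jl | A (i, jl)] -> (i < k0)%N.
  by rewrite ltnNge; apply: contra_notN => /fin.
split; first by apply: sub_finite_set (finite_II k0) => i /row_small.
apply: (sub_finite_set (B := \bigcup_(i in `I_k0)
    pair i @` [set j | infinite_set [set l | A (i, (j, l))]])).
  move=> [i j] /= ic; exists i; last by exists j.
  apply: row_small; apply: contra_not ic => /(finite_image snd).
  by apply: sub_finite_set => l Al; exists (j, l).
apply: bigcup_finite; first exact: finite_II.
by move=> i /= ik; apply: finite_image; exact: fin2.
Qed.

Definition adapted (X : Type) (p s : X -> nat) (f : X -> nat * (nat * nat)) :=
  (forall x y, (f x).1 = (f y).1 <-> s x = s y) /\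
  (forall x y, (f x).1 = (f y).1 /\ (f x).2.1 = (f y).2.1 <-> p x = p y).

Lemma ideal_below_of_adapted (X : Type) (I : set (set X)) (p s : X -> nat) f :
  bi_pattern I p s -> bijective f -> adapted p s f -> ideal_below BI I.
Proof.
move=> pat [g fK gK] [frow fcol]; exists f; split; first by exists g.
move=> A /BI_finite_heavy [fin_rows fin_cols]; apply: pat.2; split.
  pose h (c : nat * nat) := p (g (c.1, (c.2, 0%N))).
  apply: sub_finite_set (finite_image h fin_cols) => L.
  move=> /[dup] /infinite_setN0 [y [_ <-]] iL.
  exists ((f y).1, (f y).2.1); last by apply/fcol; rewrite gK.
  move: iL; apply: contra_not => /(finite_image (fun l => g ((f y).1, ((f y).2.1, l)))).
  apply: sub_finite_set => x [Ax px].
  have [e1 e2] : (f x).1 = (f y).1 /\ (f x).2.1 = (f y).2.1 by apply/fcol.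
  by exists (f x).2.2; rewrite /= -e1 -e2 -!surjective_pairing.
pose h i := s (g (i, (0%N, 0%N))).
apply: sub_finite_set (finite_image h fin_rows) => r.
move=> /[dup] /infinite_setN0 [y [_ <-]] ir.
exists (f y).1; last by apply/frow; rewrite gK.
move: ir; apply: contra_not => /(finite_image (fun jl => g ((f y).1, jl))).
apply: sub_finite_set => x [Ax sx].
have e1 : (f x).1 = (f y).1 by apply/frow.
by exists (f x).2; rewrite /= -e1 -surjective_pairing.
Qed.

Lemma countable_infinite_enum_family (J T : Type) (D : set J) (S : J -> set T) (t0 : T) :
  (forall j, D j -> countable (S j) /\ infinite_set (S j)) ->
  exists (f : J -> T -> nat) (g : J -> nat -> T), forall j, D j ->
    (forall x, S j x -> g j (f j x) = x) /\ (forall n, S j (g j n) /\ f j (g j n) = n).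
Proof.
move=> hS; have /choice [fg hfg] : forall j, exists fg : (T -> nat) * (nat -> T), D j ->
    (forall x, S j x -> fg.2 (fg.1 x) = x) /\ (forall n, S j (fg.2 n) /\ fg.1 (fg.2 n) = n).
  move=> j; have [Dj|nDj] := pselect (D j); last by exists (fun=> 0%N, fun=> t0).
  have [cS iS] := hS j Dj; have [f [g fg]] := countable_infinite_enum cS iS.
  by exists (f, g).
by exists (fun j => (fg j).1), (fun j => (fg j).2).
Qed.

Section Coordinates.
Variables (X : Type) (p s : X -> nat).
Hypotheses (ps : forall x y, p x = p y -> s x = s y) (cX : countable [set: X]).
Hypothesis piece_infinite : forall x, infinite_set [set y | p y = p x].
Hypothesis row_infinite :
  forall x, infinite_set [set L | exists y, p y = L /\ s y = s x].
Hypothesis rows_infinite : infinite_set (range s).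

Lemma adapted_exists : exists f, bijective f /\ adapted p s f.
Proof.
have [_ [x0 _ _]] := infinite_setN0 rows_infinite.
pose pieces r := [set L | exists y, p y = L /\ s y = r].
have [fr [gr [frK grK]]] := countable_infinite_enum (countableP (range s)) rows_infinite.
have [fk [gk hk]] : exists fk gk : nat -> nat -> nat, forall r, range s r ->
    (forall L, pieces r L -> gk r (fk r L) = L) /\
    (forall n, pieces r (gk r n) /\ fk r (gk r n) = n).
  apply: (@countable_infinite_enum_family _ _ (range s) pieces 0%N) => _ [x _ <-].
  by split; [exact: countableP|exact: row_infinite].
have [fq [gq hq]] : exists (fq : nat -> X -> nat) (gq : nat -> nat -> X), forall L, range p L ->
    (forall y, p y = L -> gq L (fq L y) = y) /\
    (forall n, p (gq L n) = L /\ fq L (gq L n) = n).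
  apply: (@countable_infinite_enum_family _ _ (range p) (fun L => [set y | p y = L]) x0).
  move=> _ [x _ <-]; split.
    by apply: sub_countable cX; apply: subset_card_le.
  exact: piece_infinite.
pose f x := (fr (s x), (fk (s x) (p x), fq (p x) x)).
pose g z := gq (gk (gr z.1) z.2.1) z.2.2.
have rowx x : range s (s x) by exists x.
have piecex x : pieces (s x) (p x) by exists x.
exists f; split.
  exists g => [x|[i [j l]]]; rewrite /f /g /=.
    by rewrite frK // (hk _ (rowx x)).1 //; apply: (hq _ (ex_intro2 _ _ x I erefl)).1.
  have [ri friK] := grK i; have [[y [py sy]] fkK] := (hk _ ri).2 j.
  have [pz fqK] := (hq _ (ex_intro2 _ _ y I py)).2 l.
  have sz : s (gq (gk (gr i) j) l) = s y by apply: ps; rewrite pz py.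
  by rewrite sz sy pz friK fkK fqK.
split=> x y; split => [|sxy]; rewrite /f /=.
- move=> e; rewrite -(frK _ (rowx x)) -(frK _ (rowx y)); congr gr; exact: e.
- by rewrite sxy.
- move=> [e1 e2]; have sxy : s x = s y by rewrite -(frK _ (rowx x)) e1 frK.
  rewrite -((hk _ (rowx x)).1 _ (piecex x)) e2 sxy.
  by rewrite ((hk _ (rowx y)).1 _ (piecex y)).
- by rewrite (ps sxy) sxy.
Qed.

End Coordinates.

Section Regroup.
Variables (X : Type) (I : set (set X)) (p s : X -> nat).
Hypotheses (idealI : is_ideal I) (pat : bi_pattern I p s).
Hypotheses (rows_finite : finite_set (range s)) (pieces_infinite : infinite_set (range p)).

Lemma finite_pieces_ideal_of_finite_rows A : finite_fibres p A -> I A.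
Proof.
move=> fA; apply: (idealS idealI (A := \bigcup_(i in range s) (A `&` [set x | s x = i]))).
  by move=> x Ax; exists (s x); [exists x|].
apply: (ideal_bigcup idealI) => // i _.
apply: (bi_pattern_row_subset pat (i := i)); first by move=> x [].
by move=> k; apply: sub_finite_set (fA k) => x [[]].
Qed.

(* The pieces are redistributed into infinitely many rows, each with
   infinitely many pieces, through an enumeration of the pieces by [nat * nat]. *)
Lemma regroup_rows : exists s' : X -> nat, [/\ bi_pattern I p s',
    (forall x, infinite_set [set L | exists y, p y = L /\ s' y = s' x]) &
    infinite_set (range s')].
Proof.
have [fp [gp [fpK gpK]]] :=
  countable_infinite_enum (countableP [set: nat * nat]) infinite_prod_nat.
have [fb [gb [fbK gbK]]] := countable_infinite_enum (countableP (range p)) pieces_infinite.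
pose s' x := (gp (fb (p x))).1.
have ps' x y : p x = p y -> s' x = s' y by rewrite /s' => ->.
have row_piece j m : exists y, p y = gb (fp (j, m)) /\ s' y = j.
  have [[y _ py] fbgb] := gbK (fp (j, m)); exists y; split => //.
  by rewrite /s' py fbgb fpK.
exists s'; split.
- apply: (bi_pattern_intro idealI ps' (bi_pattern_piece pat)).
    by move=> j A _; exact: finite_pieces_ideal_of_finite_rows.
  move=> A fA; apply: finite_pieces_ideal_of_finite_rows => L.
  have [[y _ py]|nL] := pselect (range p L); last first.
    by apply: finite_set_empty => x [_ px]; apply: nL; exists x.
  apply: sub_finite_set (fA (s' y)) => x [Ax px]; split => //.
  by apply: ps'; rewrite px py.
- move=> x; apply: (sub_infinite_set (A := (fun m => gb (fp (s' x, m))) @` setT)).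
    by move=> L [m _ <-]; exact: row_piece.
  apply: (infinite_image_inj infinite_nat) => a b _ _ e.
  have := congr1 fb e; rewrite !(gbK _).2 => /(congr1 gp).
  by rewrite !fpK // => -[].
- apply: (sub_infinite_set _ infinite_nat) => j _.
  by have [y [_ sy]] := row_piece j 0%N; exists y.
Qed.

End Regroup.

Lemma ideal_below_of_pattern (X : Type) (I : set (set X)) (p s : X -> nat) :
  is_ideal I -> countable [set: X] -> bi_pattern I p s -> ideal_below BI I.
Proof.
move=> idealI cX pat; have npat := norm_pattern idealI pat.
have pieces_inf := norm_piece_infinite idealI pat.
have [x0 _] := positive_nonempty idealI (idealNT idealI).
have [fin|inf] := pselect (finite_set (range (norm_row p s))); last first.
  have [f [fbij fad]] := adapted_exists npat.1 cX pieces_inf (norm_row_infinite idealI pat) inf.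
  exact: ideal_below_of_adapted npat fbij fad.
have [s' [pat' rows_inf inf']] : exists s', [/\ bi_pattern I (norm_piece p s) s',
    (forall x, infinite_set [set L | exists y, norm_piece p s y = L /\ s' y = s' x]) &
    infinite_set (range s')].
  apply: (regroup_rows idealI npat fin).
  by apply: (sub_infinite_set _ (norm_row_infinite idealI pat (x := x0))) => L [y [<- _]]; exists y.
have [f [fbij fad]] := adapted_exists pat'.1 cX pieces_inf rows_inf inf'.
exact: ideal_below_of_adapted pat' fbij fad.
Qed.

Definition trace_ideal (X : Type) (I : set (set X)) (D : set X) := [set A | I (A `&` D)].

Lemma trace_is_ideal (X : Type) (I : set (set X)) (D : set X) :
  is_ideal I -> ~ I D -> is_ideal (trace_ideal I D).
Proof.
move=> idealI nD; split.
- by move=> A B BA; apply: (idealS idealI) => x [/BA].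
- by move=> A B IA IB; rewrite /trace_ideal /= setIUl; apply: (idealU idealI).
- by move=> A fA; apply: (ideal_finite idealI); apply: sub_finite_set fA => x [].
- by rewrite /trace_ideal /= setTI.
Qed.

Definition seed (j : nat) : set nat := (fun i : nat => pickle (j, i)) @` setT.

Lemma seed_infinite j : infinite_set (seed j).
Proof. by apply: (infinite_image_inj infinite_nat) => a b _ _ /(pcan_inj pickleK) []. Qed.

Lemma seed_disjoint j j' m : seed j m -> seed j' m -> j = j'.
Proof. by move=> [i _ <-] [i' _ /(pcan_inj pickleK) []]. Qed.

Section Stage.
Variables (X : Type) (I : set (set X)) (D : set X) (g : X -> nat) (C : nat -> set nat).

(* [g] restricted to [D] is the part of a sequence lying in omega, [a] is the
   new member of the family and the [C k] are the members built before. *)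
Definition converging_part (a : set nat) :=
  exists2 B, B `<=` D /\ ~ I B &
    (exists m, forall n, B n -> g n = m) \/
    (finite_fibres g B /\
      exists2 c, c = a \/ (exists k, c = C k) & forall n, B n -> c (g n)).

Definition stage (a : set nat) :=
  [/\ infinite_set a, (forall k, finite_set (a `&` C k)) &
      converging_part a \/
      exists sigma, forall A, A `<=` D -> bi_small g (sigma \o g) A -> I A].

Hypothesis idealI : is_ideal I.
Hypothesis C_even : forall j, C j.*2 = seed j.
Hypothesis C_odd : forall n k, finite_set (seed n `&` C k.*2.+1).

(* Pick in each [seed n] a point outside [C 1, C 3, ..., C (2n+1)]. *)
Lemma exists_almost_disjoint : exists d, infinite_set d /\ forall k, finite_set (d `&` C k).
Proof.
have /choice [c hc] : forall n, exists c, seed n c /\ forall k, (k <= n)%N -> ~ C k.*2.+1 c.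
  move=> n; apply: contrapT => /forallNP h.
  suff : finite_set (seed n) by exact: seed_infinite.
  apply: (sub_finite_set (B := \bigcup_(k in `I_n.+1) (seed n `&` C k.*2.+1))).
    move=> m snm; have /not_andP [//|/existsNP [k /not_implyP [kn /contrapT Ck]]] := h m.
    by exists k => //=; rewrite ltnS.
  by apply: bigcup_finite => [|k _]; [exact: finite_II|exact: C_odd].
exists (range c); split.
  apply: (infinite_image_inj infinite_nat) => a b _ _ e.
  by apply: (seed_disjoint (hc a).1); rewrite e; exact: (hc b).1.
move=> k; rewrite -[k]odd_double_half; case: (odd k) => /=.
  apply: sub_finite_set (finite_image c (finite_II (k./2).+1)) => _ [[n _ <-] Cn].
  exists n => //=; rewrite ltnS leqNgt; apply/negP => kn.
  by apply: (hc n).2 Cn; rewrite ltnW.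
rewrite add0n C_even; apply: sub_finite_set (finite_set1 (c k./2)) => _ [[n _ <-] sn].
by rewrite /= (seed_disjoint (hc n).1 sn).
Qed.

Definition first_cover m := xget 0%N [set l | C l m /\ forall k, C k m -> (l <= k)%N].

(* The rows of [row_index] are the sets [C l] minus the earlier ones (even
   indices) and the singletons of the points outside every [C l] (odd
   indices). *)
Definition row_index m := if `[< exists k, C k m >] then (first_cover m).*2 else m.*2.+1.

Lemma first_coverP k m :
  C k m -> C (first_cover m) m /\ forall k', C k' m -> (first_cover m <= k')%N.
Proof.
move=> Ckm; apply: (@xgetPex _ 0%N [set l | C l m /\ forall k, C k m -> (l <= k)%N]).
have ex : exists k, `[< C k m >] by exists k; apply/asboolP.
case: (ex_minnP ex) => l /asboolP Clm lmin; exists l; split => // k' /asboolP.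
exact: lmin.
Qed.

Lemma row_index_cover k m : C k m -> exists2 l, (l <= k)%N & row_index m = l.*2.
Proof.
move=> Ckm; exists (first_cover m); first exact: (first_coverP Ckm).2.
by rewrite /row_index asboolT //; exists k.
Qed.

Lemma row_index_even l m : row_index m = l.*2 -> C l m.
Proof.
rewrite /row_index; case: asboolP => [[k Ckm]|_]; last by move/double_oddN.
by move=> /double_inj <-; exact: (first_coverP Ckm).1.
Qed.

Lemma row_index_odd m m' : row_index m = m'.*2.+1 -> m' = m.
Proof.
rewrite /row_index; case: asboolP => _; first by move/esym/double_oddN.
by move=> [/double_inj].
Qed.

Lemma stage_of_spread B : B `<=` D -> ~ I B -> finite_fibres (row_index \o g) B ->
  exists a, stage a.
Proof.
move=> BD nB fB.
have fgB : finite_fibres g B.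
  by move=> m; apply: sub_finite_set (fB (row_index m)) => n [Bn /= <-].
exists (g @` B); split.
- exact: infinite_image_finite_fibres fgB (positive_infinite idealI nB).
- move=> k; apply: (sub_finite_set (B := g @`
      \bigcup_(l in `I_k.+1) (B `&` [set n | row_index (g n) = l.*2]))).
    move=> _ [[n Bn <-] Cg]; have [l lk rl] := row_index_cover Cg.
    by exists n => //; exists l => //=; rewrite ltnS.
  by apply: finite_image; apply: bigcup_finite => [|l _]; [exact: finite_II|exact: fB].
- left; exists B => //; right; split => //.
  by exists (g @` B); [left|move=> n Bn; exists n].
Qed.

Lemma row_index_small_ideal d :
  ~ converging_part d ->
  ~ (exists2 B, B `<=` D /\ ~ I B & finite_fibres (row_index \o g) B) ->
  forall A, A `<=` D -> bi_small g (row_index \o g) A -> I A.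
Proof.
move=> nconv nspread; have [ID|nD] := pselect (I D).
  by move=> A AD _; apply: (idealS idealI) ID.
have conv B : B `<=` D -> ~ I B -> (exists m, forall n, B n -> g n = m) \/
    (finite_fibres g B /\ exists2 c, c = d \/ (exists k, c = C k) & forall n, B n -> c (g n)) ->
    False.
  by move=> BD nB h; apply: nconv; exists B.
have fibre_ideal m : I ([set n | g n = m] `&` D).
  by apply: contrapT => nI; apply: (conv _ _ nI); [move=> n []|left; exists m => n []].
suff [_ pat] : bi_pattern (trace_ideal I D) g (row_index \o g).
  by move=> A AD /pat; rewrite /trace_ideal /= setIidl.
apply: (bi_pattern_intro (trace_is_ideal idealI nD)) => //.
- by move=> x y /= ->.
- move=> i A Ai fA; rewrite /trace_ideal /=.
  move: Ai; rewrite -[i]odd_double_half; case: (odd i) => /= Ai.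
    apply: (idealS idealI _ (fibre_ideal i./2)) => n [An Dn]; split => //=.
    by apply/esym/row_index_odd; exact: Ai.
  apply: contrapT => nI; apply: (conv _ _ nI); first by move=> n [].
  right; split; first by move=> m; apply: sub_finite_set (fA m) => n [[]].
  by exists (C i./2); [right; exists i./2|move=> n [/Ai /row_index_even]].
- move=> A fA; rewrite /trace_ideal /=; apply: contrapT => nI; apply: nspread.
  by exists (A `&` D) => //; move=> r; apply: sub_finite_set (fA r) => n [[]].
Qed.

Lemma stage_exists : exists a, stage a.
Proof.
have [[B [BD nB] fB]|nspread] :=
  pselect (exists2 B, B `<=` D /\ ~ I B & finite_fibres (row_index \o g) B).
  exact: stage_of_spread BD nB fB.
have [d [dinf dfin]] := exists_almost_disjoint; exists d; split => //.
have [conv|nconv] := pselect (converging_part d); first by left.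
by right; exists row_index; apply: row_index_small_ideal nconv nspread.
Qed.

End Stage.

Lemma countable_inj (T U : Type) (A : set T) (B : set U) (h : T -> U) :
  countable B -> (forall x, A x -> B (h x)) -> {in A &, injective h} -> countable A.
Proof.
move=> /countable_injP [f finj] hAB hinj; apply/countable_injP; exists (f \o h).
move=> x y Ax Ay /finj; rewrite !inE => /(_ (hAB _ (set_mem Ax)) (hAB _ (set_mem Ay))).
exact: hinj.
Qed.

Lemma set_nat_uncountable : ~ countable [set: set nat].
Proof.
move=> /countable_injP [f finj].
pose S := [set n | exists2 T, f T = n & ~ T n].
have [[T fT nT]|nS] := pselect (S (f S)).
  have eTS : T = S by apply: finj; rewrite ?in_setT.
  by apply: (nT); rewrite eTS; exists T.
by apply: (nS); exists S.
Qed.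

Lemma well_founded_minimal (T : Type) (lt : T -> T -> Prop) (P : T -> Prop) x :
  well_founded lt -> P x -> exists2 y, P y & forall z, lt z y -> ~ P z.
Proof.
move=> wf; elim: (wf x) => {}x _ IH Px.
have [[z ltzx Pz]|nz] := pselect (exists2 z, lt z x & P z); first exact: IH ltzx Pz.
by exists x => // z ltzx Pz; apply: nz; exists z.
Qed.

Lemma well_founded_total_exists (T : eqType) : exists lt : T -> T -> Prop,
  well_founded lt /\ forall x y, x <> y -> lt x y \/ lt y x.
Proof.
have [R woR] := well_ordering_principle T.
have minP (P : set T) x : P x -> exists2 z, P z & forall y, P y -> R z y.
  move=> Px; have [|z [[zP lb] _]] := woR (mem P); first by exists x; rewrite inE.
  by exists z; [rewrite inE in zP|move=> y Py; apply: lb; rewrite inE].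
have Rtot x y : R x y \/ R y x.
  have [z [<-|<-] zmin] := minP (fun u => u = x \/ u = y) x (or_introl erefl).
    by left; apply: zmin; right.
  by right; apply: zmin; left.
have Rrefl x : R x x by have [z <- zmin] := minP (fun u => u = x) x erefl; apply: zmin.
have Ranti x y : R x y -> R y x -> x = y.
  move=> Rxy Ryx; have [|z [_ zuniq]] := woR (mem [set u | u = x \/ u = y]).
    by exists x; rewrite inE; left.
  have minu u : u = x \/ u = y -> z = u.
    move=> hu; apply: zuniq; split; first by rewrite inE.
    by move=> v; rewrite inE => -[->|->]; case: hu => ->; rewrite ?Rrefl.
  by rewrite -(minu x (or_introl erefl)) -(minu y (or_intror erefl)).
exists (fun x y => R x y /\ x <> y); split.
  move=> x; apply: contrapT => nAx.
  have [m nAm mmin] := minP (fun y => ~ Acc _ y) x nAx.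
  apply: nAm; constructor => y [Rym ym]; apply: contrapT => nAy.
  by apply: ym; apply: Ranti => //; apply: mmin.
by move=> x y xy; case: (Rtot x y) => R'; [left|right]; split => // /esym.
Qed.

Lemma countable_segments_uncountable (T : Type) (lt : T -> T -> Prop) :
  well_founded lt -> ~ countable [set: T] ->
  ~ countable [set x | countable [set y | lt y x]].
Proof.
move=> wf unc cW; have [[x nWx]|allW] := pselect (exists x, ~ countable [set y | lt y x]).
  have [y nWy ymin] := well_founded_minimal (P := fun x => ~ countable [set y | lt y x]) wf nWx.
  apply: nWy; apply: sub_countable cW; apply: subset_card_le => z ltzy.
  by apply: contrapT; exact: ymin.
apply: unc; apply: sub_countable cW; apply: subset_card_le => x _.
by apply: contrapT => nx; apply: allW; exists x.
Qed.

(* In a well-order of [set nat], the elements with countably many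
   predecessors form an uncountable initial segment, which CH maps onto
   [set nat]. *)
Lemma CH_enumeration : CH -> exists (W : Type) (lt : W -> W -> Prop) (phi : W -> set nat),
  [/\ well_founded lt, (forall v w, v <> w -> lt v w \/ lt w v),
      (forall w, countable [set v | lt v w]) & forall S, exists w, phi w = S].
Proof.
move=> ch; have [lt [wf tot]] := well_founded_total_exists (set nat).
pose W0 := [set S | countable [set U | lt U S]].
have [cW0|/card_set_bijP [phi [_ _ phiS]]] := ch W0.
  by exfalso; exact: countable_segments_uncountable wf set_nat_uncountable cW0.
exists {S | W0 S}, (fun v w => lt (sval v) (sval w)), (fun w => phi (sval w)); split.
- move=> [S WS]; elim: (wf S) WS => {}S _ IH WS.
  by constructor => -[U WU] /= ltUS; apply: IH.
- move=> [v Wv] [w Ww] /= vw; apply: tot => evw; apply: vw.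
  by move: Wv Ww; rewrite evw => Wv Ww; congr exist; exact: Prop_irrelevance.
- move=> [w Ww]; apply: (countable_inj (h := sval) Ww) => // u v _ _.
  exact: eq_sig_hprop.
- by move=> S; have [U WU <-] := phiS S I; exists (exist _ U WU).
Qed.

Lemma countable_enumeration (T : choiceType) (t0 : T) : exists E : set T -> nat -> T,
  forall F, countable F -> F !=set0 ->
    (forall n, F (E F n)) /\ (forall c, F c -> exists n, E F n = c).
Proof.
have /choice [E hE] : forall F : set T, exists e : nat -> T, countable F -> F !=set0 ->
    (forall n, F (e n)) /\ (forall c, F c -> exists n, e n = c).
  move=> F; have [/countable_injP [f finj]|nc] := pselect (countable F); last first.
    by exists (fun=> t0).
  exists (fun n => xget (xget t0 F) [set c | F c /\ f c = n]) => _ F0; split.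
    move=> n; case: xgetP => [c _ []//|_]; exact: xgetPex.
  move=> c Fc; exists (f c); case: xgetP => [c' _ [Fc' fc']|/(_ c)]; last by case.
  by apply: finj; rewrite ?inE.
by exists E.
Qed.

Section Tower.
Variables (W : Type) (lt : W -> W -> Prop).
Hypotheses (wf : well_founded lt) (lt_countable : forall w, countable [set v | lt v w]).
Variable E : set (set nat) -> nat -> set nat.
Hypothesis E_enum : forall F, countable F -> F !=set0 ->
  (forall n, F (E F n)) /\ (forall c, F c -> exists n, E F n = c).
Variable st : (nat -> set nat) -> W -> set nat.
Hypothesis st_avoids : forall C w, (forall j, C j.*2 = seed j) ->
  (forall n k, finite_set (seed n `&` C k.*2.+1)) -> forall k, finite_set (st C w `&` C k).

Definition earlier w (rec : forall v, lt v w -> set nat) : set (set nat) :=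
  [set c | c = set0 \/ exists v (h : lt v w), c = rec v h].

Definition avoided_by w (rec : forall v, lt v w -> set nat) (k : nat) : set nat :=
  if odd k then E (earlier rec) k./2 else seed k./2.

(* [tower w] is chosen by [st] once all [tower v], [v < w], are known; it has
   to avoid the seeds (even indices) and the earlier [tower v] (odd ones). *)
Definition tower : W -> set nat := Fix wf (fun=> set nat) (fun w rec => st (avoided_by rec) w).

Definition avoided w : nat -> set nat := avoided_by (fun v (_ : lt v w) => tower v).

Lemma towerE w : tower w = st (avoided w) w.
Proof.
rewrite /tower Fix_eq // => v f f' ff'; suff -> : f = f' by [].
by apply: functional_extensionality_dep => u; apply: functional_extensionality_dep.
Qed.

Lemma avoided_even w j : avoided w j.*2 = seed j.
Proof. by rewrite /avoided /avoided_by odd_double doubleK. Qed.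

Lemma earlier_enum w : let F := earlier (fun v (_ : lt v w) => tower v) in
  (forall n, F (E F n)) /\ (forall c, F c -> exists n, E F n = c).
Proof.
apply: E_enum; last by exists set0; left.
apply: (sub_countable (B := \bigcup_(b in [set: bool])
    if b then [set set0] else tower @` [set v | lt v w])).
  apply: subset_card_le => c [->|[v [h ->]]]; first by exists true.
  by exists false => //; exists v.
apply: bigcup_countable => // -[] _; first exact: finite_set_countable (finite_set1 _).
exact: sub_countable (card_image_le _ _) (lt_countable w).
Qed.

Lemma avoided_odd w k :
  avoided w k.*2.+1 = set0 \/ exists2 v, lt v w & avoided w k.*2.+1 = tower v.
Proof.
rewrite /avoided /avoided_by /= odd_double /= uphalf_double.
by case: ((earlier_enum w).1 k) => [->|[v [h ->]]]; [left|right; exists v].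
Qed.

Lemma avoided_earlier w v : lt v w -> exists k, avoided w k.*2.+1 = tower v.
Proof.
move=> h; have [|k ek] := (earlier_enum w).2 (tower v); first by right; exists v, h.
by exists k; rewrite /avoided /avoided_by /= odd_double /= uphalf_double.
Qed.

Lemma seed_tower_finite w n : finite_set (seed n `&` tower w).
Proof.
elim: (wf w) n => {}w _ IH n; rewrite towerE setIC -(avoided_even w n).
apply: st_avoids => [j|n' k]; first exact: avoided_even.
by case: (avoided_odd w k) => [->|[v lv ->]]; [rewrite setI0|exact: IH].
Qed.

Lemma avoided_odd_finite w n k : finite_set (seed n `&` avoided w k.*2.+1).
Proof.
by case: (avoided_odd w k) => [->|[v _ ->]]; [rewrite setI0|exact: seed_tower_finite].
Qed.

End Tower.

Lemma countable_kernel_code (X T : Type) (x : X -> T) : countable [set: X] ->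
  exists c : X -> nat, forall n n', c n = c n' <-> x n = x n'.
Proof.
move=> /countable_injP [e einj].
pose c n := xget 0%N [set k | exists n', e n' = k /\ x n' = x n].
have cE n : exists n1, e n1 = c n /\ x n1 = x n.
  by apply: (xgetPex 0%N (P := [set k | exists n', e n' = k /\ x n' = x n])); exists (e n), n.
exists c => n n'; split => [cnn'|xnn']; last by rewrite /c xnn'.
have [n1 [e1 x1]] := cE n; have [n2 [e2 x2]] := cE n'.
by rewrite -x1 -x2; congr x; apply: einj; rewrite ?in_setT // e1 e2.
Qed.

Section Sequence.
Variables (X : Type) (I : set (set X)) (A : set (set nat)) (x : X -> mrowka A).
Hypotheses (idealI : is_ideal I) (cX : countable [set: X]).
Hypothesis convergent_ideal : forall B, converges_on x B -> I B.

Definition numeric_part := [set n | exists m, x n = MN m].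
Definition numeric_value n := if x n is MN m then m else 0%N.

Lemma numeric_valueE n : numeric_part n -> x n = MN (numeric_value n).
Proof. by move=> [m e]; rewrite /numeric_value e. Qed.

Lemma no_converging_part C a : A a -> (forall k, A (C k) \/ C k = set0) ->
  ~ converging_part I numeric_part numeric_value C a.
Proof.
move=> Aa AC [B [BD nB] conv]; apply: (nB); apply: convergent_ideal.
case: conv => [[m hm]|[fB [c hc cB]]].
  apply: (converges_on_cst (v := MN m)) => n Bn.
  by rewrite numeric_valueE ?hm //; exact: BD.
have [n0 Bn0] := positive_nonempty idealI nB.
have Ac : A c.
  case: hc => [->//|[k ek]]; rewrite ek in cB *; case: (AC k) => // e.
  by have := cB n0 Bn0; rewrite e.
apply: (converges_on_MA (c := exist _ c Ac) (g := numeric_value)) => // n Bn.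
by split; [exact: numeric_valueE (BD n Bn)|exact: cB].
Qed.

Lemma sequence_code : exists p : X -> nat,
  (forall n n', p n = p n' <-> x n = x n') /\
  forall n, numeric_part n -> p n = (numeric_value n).*2.
Proof.
have [c cP] := countable_kernel_code x cX.
exists (fun n => if x n is MN m then m.*2 else (c n).*2.+1); split; last first.
  by move=> n /numeric_valueE ->.
move=> n n'; split=> [|e]; last by rewrite e (proj2 (cP n n') e).
case En : (x n) => [m|b|]; case En' : (x n') => [m'|b'|];
  do ?[by move=> /double_inj ->|by move=> /esym/double_oddN|by move=> /double_oddN].
all: by move=> /eq_add_S/double_inj/cP; rewrite En En'.
Qed.

Lemma MA_part_ideal (p : X -> nat) B : (forall n n', p n = p n' <-> x n = x n') ->
  finite_set (infinite_fibres p B) -> I (B `&` [set n | exists b, x n = MA b]).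
Proof.
move=> pP fKp; pose R := [set n | B n /\ (exists b, x n = MA b) /\ ~ infinite_fibres p B (p n)].
apply: (idealS idealI (A := \bigcup_(k in infinite_fibres p B) [set n | p n = k] `|` R)).
  move=> n [Bn xn]; have [Kn|nKn] := pselect (infinite_fibres p B (p n)).
    by left; exists (p n).
  by right.
apply: (idealU idealI).
  apply: (ideal_bigcup idealI) => // k _.
  have [[n0 pn0]|nk] := pselect (exists n0, p n0 = k); last first.
    by apply: (ideal_finite idealI); apply: finite_set_empty => n pn; apply: nk; exists n.
  apply: convergent_ideal; apply: (converges_on_cst (v := x n0)) => n /= pn.
  by apply/pP; rewrite pn.
apply: convergent_ideal; apply: converges_on_MInf => [n [_ []]|b] //.
have [[n0 [[Bn0 [_ nK]] xn0]]|nb] := pselect (exists n0, R n0 /\ x n0 = MA b); last first.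
  by apply: finite_set_empty => n Rn; apply: nb; exists n.
apply: (sub_finite_set (B := B `&` [set n | p n = p n0])); last exact: contrapT nK.
by move=> n [[Bn _] xn]; split => //; apply/pP; rewrite xn xn0.
Qed.

Lemma pattern_of_sequence sigma :
  (forall B, B `<=` numeric_part ->
     bi_small numeric_value (sigma \o numeric_value) B -> I B) ->
  exists p s, bi_pattern I p s.
Proof.
move=> sigmaI; have [p [pP pD]] := sequence_code.
pose s n := match x n with MInf => 0%N | MA _ => 1%N | MN m => (sigma m).+2 end.
exists p, s; split=> [n n' /pP e|B [fKp fKs]]; first by rewrite /s e.
apply: (idealS idealI (A := [set n | x n = MInf]
    `|` (B `&` [set n | exists b, x n = MA b]) `|` (B `&` numeric_part))).
  move=> n Bn; case En : (x n) => [m|b|]; first by right; split => //; exists m.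
    by left; right; split => //; exists b.
  by left; left.
apply: (idealU idealI); first apply: (idealU idealI).
- by apply: convergent_ideal; apply: (converges_on_cst (v := MInf)).
- exact: MA_part_ideal pP fKp.
- apply: sigmaI; first by move=> n [].
  split.
    apply: sub_finite_set (finite_image (fun k => k./2) fKp) => m im.
    exists m.*2; last by rewrite /= doubleK.
    apply: contra_not im; apply: sub_finite_set => n [[Bn Dn] vn]; split => //.
    by rewrite /= pD // vn.
  apply: sub_finite_set (finite_image (fun j => j.-2) fKs) => i ii.
  exists i.+2 => //; apply: contra_not ii; apply: sub_finite_set => n [[Bn Dn] /= si].
  by split => //; rewrite /= /s (numeric_valueE Dn) -si.
Qed.

End Sequence.

Lemma mrowka_FinBW (X : Type) (I : set (set X)) (A : set (set nat)) :
  is_ideal I -> unboring I -> countable [set: X] ->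
  (forall a b, A a -> A b -> a <> b -> finite_set (a `&` b)) ->
  (forall D g, exists C a, [/\ A a, (forall k, A (C k) \/ C k = set0) & stage I D g C a]) ->
  FinBW I (mrowka A).
Proof.
move=> idealI unb cX AD stages; split; first exact: mrowka_hausdorff.
move=> x; apply: contrapT => /forallNP nconv.
have convI B : converges_on x B -> I B.
  by move=> cB; apply: contrapT => nB; apply: (nconv B).
have [C [a [Aa AC [_ _ [conv|[sigma sigmaI]]]]]] :=
  stages (numeric_part x) (numeric_value x).
  exact: (no_converging_part idealI convI Aa AC conv).
have [p [s pat]] := pattern_of_sequence idealI cX convI sigmaI.
exact: unb (ideal_below_of_pattern idealI cX pat).
Qed.

Lemma stage_choice (X : Type) (I : set (set X)) : is_ideal I ->
  exists st : (nat -> set nat) -> set X -> (X -> nat) -> set nat, forall C D g,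
    (forall j, C j.*2 = seed j) -> (forall n k, finite_set (seed n `&` C k.*2.+1)) ->
    stage I D g C (st C D g).
Proof.
move=> idealI.
have /choice [st hst] : forall CDg : (nat -> set nat) * set X * (X -> nat), exists a,
    (forall j, CDg.1.1 j.*2 = seed j) ->
    (forall n k, finite_set (seed n `&` CDg.1.1 k.*2.+1)) ->
    stage I CDg.1.2 CDg.2 CDg.1.1 a.
  move=> [[C D] g] /=.
  have [[Ce Co]|nh] := pselect ((forall j, C j.*2 = seed j) /\
                               (forall n k, finite_set (seed n `&` C k.*2.+1))).
    by have [a ha] := stage_exists D g idealI Ce Co; exists a.
  by exists set0 => Ce Co; exfalso; apply: nh.
by exists (fun C D g => st (C, D, g)) => C D g; apply: (hst (C, D, g)).
Qed.

Lemma partial_sequence_code (X : Type) : countable [set: X] ->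
  exists code : set nat -> set X * (X -> nat), forall D g, exists S, code S = (D, g).
Proof.
move=> /countable_injP [e einj].
have einj' : injective e by move=> u v; apply: einj; rewrite in_setT.
(* [S] codes [D] on the even numbers and the graph of [g] on the odd ones. *)
exists (fun S => ([set x | S (e x).*2], fun x => xget 0%N [set m | S (pickle (e x, m)).*2.+1])).
move=> D g.
exists [set k | (exists2 x, k = (e x).*2 & D x) \/ (exists x, k = (pickle (e x, g x)).*2.+1)].
congr pair.
  apply/seteqP; split => x /=; last by move=> Dx; left; exists x.
  case=> [[x' /double_inj /einj' -> //]|[x' /esym /double_oddN []]].
apply: funext => x; apply: xget_unique; first by right; exists x.
move=> m [[x' /double_oddN []]|[x' /eq_add_S /double_inj]].
by move=> /(pcan_inj pickleK) [/einj' -> ->].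
Qed.

Section Construction.
Variables (X : Type) (I : set (set X)).
Hypotheses (ch : CH) (idealI : is_ideal I) (cX : countable [set: X]).

Lemma tower_exists : exists (W : Type) (a : W -> set nat) (C : W -> nat -> set nat),
  [/\ forall D g, exists w, stage I D g (C w) (a w),
      forall w, infinite_set (a w) /\ forall j, finite_set (seed j `&` a w),
      forall w k, (exists j, C w k = seed j) \/ C w k = set0 \/ exists v, C w k = a v,
      forall v w, v <> w -> finite_set (a v `&` a w) &
      ~ countable [set: W]].
Proof.
have [W [lt [phi [wf tot lt_countable phi_onto]]]] := CH_enumeration ch.
have [code code_onto] := partial_sequence_code cX.
have [E E_enum] := countable_enumeration (set0 : set nat).
have [st st_stage] := stage_choice idealI.
pose task w := code (phi w).
pose st' C w := st C (task w).1 (task w).2.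
have st'_avoids C w : (forall j, C j.*2 = seed j) ->
    (forall n k, finite_set (seed n `&` C k.*2.+1)) -> forall k, finite_set (st' C w `&` C k).
  by move=> Ce Co; case: (st_stage C (task w).1 (task w).2 Ce Co).
pose a := tower wf E st'; pose C := avoided wf E st'.
have a_stage w : stage I (task w).1 (task w).2 (C w) (a w).
  rewrite /a towerE; apply: st_stage => [j|n k]; first exact: avoided_even.
  exact: (avoided_odd_finite wf lt_countable E_enum st'_avoids w n k).
exists W, a, C; split.
- move=> D g; have [S eS] := code_onto D g; have [w ew] := phi_onto S.
  by exists w; move: (a_stage w); rewrite /task ew eS.
- move=> w; case: (a_stage w) => ainf afin _; split => // j.
  by rewrite setIC -(avoided_even wf E st' w j); exact: afin.
- move=> w k; rewrite /C -[k]odd_double_half; case: (odd k); rewrite ?add1n ?add0n.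
    case: (avoided_odd wf lt_countable E_enum st' w k./2) => [->|[v _ ->]].
      by right; left.
    by right; right; exists v.
  by left; exists k./2; rewrite avoided_even.
- have below v w : lt v w -> finite_set (a v `&` a w).
    move=> /(avoided_earlier wf lt_countable E_enum st') [k ek].
    by case: (a_stage w) => _ fin _; rewrite setIC -[a v]ek; exact: fin.
  by move=> v w /tot [/below|/below]; rewrite // setIC.
- move=> cW; apply: set_nat_uncountable.
  rewrite (_ : [set: set nat] = phi @` setT); first exact: sub_countable (card_image_le _ _) cW.
  by apply/seteqP; split => // S _; have [w <-] := phi_onto S; exists w.
Qed.

Lemma CH_mrowka_family : exists A, [/\ almost_disjoint_family A,
  ~ countable [set: mrowka A] &
  forall D g, exists C a, [/\ A a, (forall k, A (C k) \/ C k = set0) & stage I D g C a]].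
Proof.
have [W [a [C [stages a_ok C_shape AD uncW]]]] := tower_exists.
have a_inj : injective a.
  move=> v w e; apply: contrapT => vw; apply: (a_ok v).1.
  by have := AD v w vw; rewrite e setIid.
have seed0 j : seed j (pickle (j, 0%N)) by exists 0%N.
pose A := range seed `|` range a.
have A_ad u v : A u -> A v -> u <> v -> finite_set (u `&` v).
  move=> [[j _ <-]|[w _ <-]] [[j' _ <-]|[w' _ <-]] uv.
  - apply: finite_set_empty => m [s1 s2]; apply: uv; congr seed; exact: seed_disjoint s1 s2.
  - exact: (a_ok w').2.
  - by rewrite setIC; exact: (a_ok w).2.
  - by apply: AD => e; apply: uv; rewrite e.
exists A; split.
- split => //.
  + apply: (sub_infinite_set (A := range seed)); first by move=> u; left.
    apply: (infinite_image_inj infinite_nat) => j j' _ _ e.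
    by apply: (seed_disjoint (seed0 j)); rewrite -e.
  + by move=> u [[j _ <-]|[w _ <-]]; [exact: seed_infinite|exact: (a_ok w).1].
- move=> cM; apply: uncW.
  have Aa w : A (a w) by right; exists w.
  apply: (countable_inj (h := fun w => MA (exist _ (a w) (Aa w)) : mrowka A) cM) => //.
  by move=> v w _ _ /(congr1 (fun z : mrowka A => if z is MA b then sval b else set0)) /a_inj.
- move=> D g; have [w sw] := stages D g; exists (C w), (a w); split => //.
    by right; exists w.
  move=> k; case: (C_shape w k) => [[j ->]|[->|[v ->]]]; last by left; right; exists v.
    by left; left; exists j.
  by right.
Qed.

End Construction.

Theorem theorem5p5 :
  CH ->
  forall (X : Type) (I : set (set X)),
    countable [set: X] -> infinite_set [set: X] ->
    is_ideal I -> unboring I ->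
    exists A : set (set nat),
      [/\ almost_disjoint_family A,
          ~ countable [set: mrowka A] &
          FinBW I (mrowka A)].
Proof.
(* [X] is infinite because [I] is an ideal on it. *)
move=> ch X I cX _ idealI unb.
have [A [AD uncA stages]] := CH_mrowka_family ch idealI cX.
exists A; split => //.
by case: AD => _ _ AD; exact: mrowka_FinBW idealI unb cX AD stages.
Qed.
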